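(* Let $G=(V,E)$ be a 3-vertex-connected graph with minimum degree $\delta$. Then Broadcast on $G$ is not solvable with $k\le \delta-2$ ignorant agents (the adversary has a winning strategy).
   Context: A graph is 3-vertex-connected if it has more than 3 vertices and remains connected after deleting any 2 vertices. Broadcast model: a connected base graph $G=(V,E)$ with $n$ nodes. There is one source agent holding a message $\mathcal M$ and $k\ge1$ ignorant agents (agents not holding $\mathcal M$); initially all agents occupy pairwise distinct nodes, the initial placement being chosen by the adversary. Time proceeds in synchronous rounds; in each round: (1) the adversary removes a (possibly empty) set $E'\subseteq E$ of edges such that $(V,E\setminus E')$ is connected; (2) each agent (agents have unique IDs, local memory, and see the entire current graph, the positions of all agents and which agents hold $\mathcal M$) chooses either to stay or to traverse an edge of $E\setminus E'$ incident to its current node; (3) agents move. Whenever an ignorant agent is at the same node as an agent holding $\mathcal M$, it receives $\mathcal M$ and becomes a source agent. The adversary is adaptive and knows the agents' strategy. Broadcast is solvable on $G$ with $k$ ignorant agents if the agents have a strategy such that, for every initial placement and every adversary behaviour, after finitely many rounds all agents hold $\mathcal M$; otherwise the adversary is said to have a winning strategy. *)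

From mathcomp Require Import all_boot.
Set Implicit Arguments. Unset Strict Implicit. Unset Printing Implicit Defensive.

(* A finite simple graph is a symmetric irreflexive relation G on a finType V. *)

Definition remaining (V : finType) (G : rel V) (Er : {set V * V}) : rel V :=
  fun x y => [&& G x y, (x, y) \notin Er & (y, x) \notin Er].

Definition connected_rel (V : finType) (r : rel V) : Prop :=
  forall x y : V, connect r x y.

Definition legal_removal (V : finType) (G : rel V) (Er : {set V * V}) : Prop :=
  (forall p, p \in Er -> G p.1 p.2) /\ connected_rel (remaining G Er).

Definition three_vertex_connected (V : finType) (G : rel V) : Prop :=
  3 < #|V| /\
  forall u v : V, u != v ->
    forall x y : V, x \notin [set u; v] -> y \notin [set u; v] ->
      connect [rel a b | [&& G a b, a \notin [set u; v] & b \notin [set u; v]]] x y.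

Definition degree (V : finType) (G : rel V) (v : V) : nat := #|[set w | G v w]|.

Definition is_min_degree (V : finType) (G : rel V) (delta : nat) : Prop :=
  (forall v, delta <= degree G v) /\ exists v, degree G v = delta.

(* Agents are 'I_k.+1; agent ord0 is the source agent, the other k are ignorant.
   A configuration = (positions of agents, set of agents holding M). *)
Definition config (V : finType) (k : nat) : Type :=
  ({ffun 'I_k.+1 -> V} * {set 'I_k.+1})%type.

(* History of completed rounds: configuration at the start of the round and
   the set of edges removed by the adversary in that round. *)
Definition history (V : finType) (k : nat) : Type :=
  seq (config V k * {set V * V}).

(* Agents' (joint, deterministic, full-information, full-memory) strategy:
   given the past, the current configuration and the current graph (via the
   removed set), each agent chooses a target node (stay = its own node).
   A target that is neither the current node nor a neighbour in the current
   graph is treated as "stay". *)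
Definition agent_strategy (V : finType) (k : nat) : Type :=
  history V k -> config V k -> {set V * V} -> 'I_k.+1 -> V.

Definition adversary (V : finType) (k : nat) : Type :=
  history V k -> config V k -> {set V * V}.

Definition step (V : finType) (G : rel V) (k : nat) (Er : {set V * V})
    (c : config V k) (target : 'I_k.+1 -> V) : config V k :=
  let pos := c.1 in
  let pos' := [ffun a => if (target a == pos a) || remaining G Er (pos a) (target a)
                         then target a else pos a] in
  (pos', [set a | [exists b, (b \in c.2) && (pos' b == pos' a)]]).

Fixpoint run (V : finType) (G : rel V) (k : nat) (sigma : agent_strategy V k)
    (adv : adversary V k) (p0 : {ffun 'I_k.+1 -> V}) (t : nat)
    : history V k * config V k :=
  match t with
  | 0 => ([::], (p0, [set ord0]))
  | t'.+1 =>
      let hc := run G sigma adv p0 t' in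
      let h := hc.1 in let c := hc.2 in
      let Er := adv h c in
      (rcons h (c, Er), step G Er c (sigma h c Er))
  end.

Definition broadcast_solvable (V : finType) (G : rel V) (k : nat) : Prop :=
  exists sigma : agent_strategy V k,
    forall p0 : {ffun 'I_k.+1 -> V}, injective p0 ->
    forall adv : adversary V k,
      (forall h c, legal_removal G (adv h c)) ->
      exists t, (run G sigma adv p0 t).2.2 = [set: 'I_k.+1].

From mathcomp Require Import all_boot.
From mathcomp Require Import zify.

Set Implicit Arguments. Unset Strict Implicit. Unset Printing Implicit Defensive.

(* The adversary keeps the source alone.  Each round, with the source at s,
   it picks a neighbour w of s and a neighbour x <> s of w, both unoccupied
   (possible since delta >= k + 2 and the ignorant agents occupy at most k
   nodes), and deletes every edge at s except sw and every edge at w except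
   ws and wx.  The graph stays connected: G - {s, w} is connected and
   contains x.  The source can only stay or move to w, and no ignorant agent
   can enter s or w, so nobody ever meets the source. *)

Lemma remaining_sym (V : finType) (G : rel V) (Er : {set V * V}) :
  symmetric G -> symmetric (remaining G Er).
Proof. by move=> Gsym a b; rewrite /remaining Gsym; congr (_ && _); apply: andbC. Qed.

Lemma step_posP (V : finType) (G : rel V) (k : nat) (Er : {set V * V})
    (c : config V k) (T : 'I_k.+1 -> V) (a : 'I_k.+1) :
  ((step G Er c T).1 a == c.1 a) || remaining G Er (c.1 a) ((step G Er c T).1 a).
Proof. by rewrite /step /= ffunE; case: ifP => [/orP[/eqP ->|->]|_]; rewrite ?eqxx ?orbT. Qed.

Lemma ffun_injective_ord (V : finType) (n : nat) :
  n <= #|V| -> exists f : {ffun 'I_n -> V}, injective f.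
Proof.
move=> le_nV; exists [ffun i => enum_val (widen_ord le_nV i)].
by move=> i j; rewrite !ffunE => /enum_val_inj /(congr1 val) eq_ij; apply: val_inj.
Qed.

Section ThreeConnected.
Variables (V : finType) (G : rel V).

Lemma connected_through_pair (r : rel V) (s w x : V) :
  symmetric r -> three_vertex_connected G -> s != w -> x \notin [set s; w] ->
  r x w -> r w s ->
  (forall a b, G a b -> a \notin [set s; w] -> b \notin [set s; w] -> r a b) ->
  connected_rel r.
Proof.
move=> rsym [_ conn] sw xsw rxw rws Gr.
have from_x z : connect r x z.
  have xw : connect r x w := connect1 rxw.
  case: (boolP (z \in [set s; w])) => [|zsw].
    by rewrite !inE => /orP[] /eqP ->; [apply: connect_trans xw (connect1 rws)|].
  apply: connect_sub (conn s w sw x z xsw zsw) => a b /and3P[Gab asw bsw].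
  exact/connect1/Gr.
move=> y z; apply: connect_trans (from_x z).
by rewrite (sym_connect_sym rsym); apply: from_x.
Qed.

Definition free_nbr (v : V) (A : {set V}) : V :=
  odflt v [pick w | G v w && (w \notin A)].

Lemma free_nbrP (v : V) (A : {set V}) :
  #|A| < degree G v -> G v (free_nbr v A) && (free_nbr v A \notin A).
Proof.
rewrite /free_nbr; case: pickP => [w Pw _ //|none lt_A_deg].
suff /subset_leq_card : [set w | G v w] \subset A by rewrite leqNgt lt_A_deg.
apply/subsetP => w; rewrite inE => Gvw.
by have := none w; rewrite Gvw => /negbFE.
Qed.

End ThreeConnected.

Section Trap.
Variables (V : finType) (G : rel V) (k : nat).
Hypothesis Gsym : symmetric G.
Hypothesis Girr : irreflexive G.
Hypothesis deg_ge : forall v, k.+2 <= degree G v.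

Definition source (c : config V k) : V := c.1 ord0.

Definition occupied (c : config V k) : {set V} := [set c.1 a | a in [set~ ord0]].

Definition gate (c : config V k) : V := free_nbr G (source c) (occupied c).

Definition exit (c : config V k) : V :=
  free_nbr G (gate c) (source c |: occupied c).

Definition trap (c : config V k) : {set V * V} :=
  [set e | [&& e.1 == source c, e.2 != gate c & G e.1 e.2]] :|:
  [set e | [&& e.1 == gate c, e.2 != source c, e.2 != exit c & G e.1 e.2]].

Definition trap_adversary : adversary V k := fun _ c => trap c.

Lemma occupied_card (c : config V k) : #|occupied c| <= k.
Proof. by apply: leq_trans (leq_imset_card _ _) _; rewrite cardsC1 card_ord. Qed.

Lemma ignorant_occupied (c : config V k) a : a != ord0 -> c.1 a \in occupied c.
Proof. by move=> a0; apply/imsetP; exists a; rewrite ?inE. Qed.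

Lemma gateP (c : config V k) : G (source c) (gate c) && (gate c \notin occupied c).
Proof. by apply: free_nbrP; have := occupied_card c; have := deg_ge (source c); lia. Qed.

Lemma exitP (c : config V k) :
  [&& G (gate c) (exit c), exit c != source c & exit c \notin occupied c].
Proof.
rewrite -negb_or -in_setU1; apply: free_nbrP.
rewrite cardsU1; have := occupied_card c; have := deg_ge (gate c).
by case: (_ \notin _) => /=; lia.
Qed.

Lemma source_neq_gate (c : config V k) : source c != gate c.
Proof. by apply: contraTneq (gateP c) => ->; rewrite Girr. Qed.

Lemma notin_trap (c : config V k) a b :
  a != source c -> a != gate c -> (a, b) \notin trap c.
Proof. by move=> As Aw; rewrite !inE /= (negbTE As) (negbTE Aw). Qed.

Lemma trap_legal : three_vertex_connected G -> forall c, legal_removal G (trap c).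
Proof.
move=> conn c; split; first by move=> p; rewrite !inE => /orP[/and3P[]|/and4P[]].
have /andP[Gsw _] := gateP c; have /and3P[Gwx xs _] := exitP c.
have sw := source_neq_gate c.
have xw : exit c != gate c by apply: contraTneq Gwx => ->; rewrite Girr.
apply: (connected_through_pair (remaining_sym _ Gsym) conn sw (x := exit c)).
- by rewrite !inE negb_or xs xw.
- rewrite /remaining Gsym Gwx notin_trap //= !inE /= eq_sym (negbTE sw).
  by rewrite !eqxx /= andbF.
- rewrite /remaining Gsym Gsw !inE /=.
  by rewrite (eq_sym (gate c)) (negbTE sw) !eqxx.
- by move=> a b Gab; rewrite !inE !negb_or => /andP[As Aw] /andP[Bs Bw];
    rewrite /remaining Gab !notin_trap.
Qed.

Lemma trap_source_edge (c : config V k) y :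
  remaining G (trap c) (source c) y -> y = gate c.
Proof.
case/and3P=> Gsy nin _; apply/eqP; apply: contraNT nin => yw.
by rewrite !inE /= eqxx yw Gsy.
Qed.

Lemma trap_ignorant_edge (c : config V k) p y :
  p != source c -> p != gate c -> p != exit c ->
  remaining G (trap c) p y -> y \notin [set source c; gate c].
Proof.
move=> ps pw px /and3P[Gpy _ nin]; rewrite !inE negb_or.
apply/andP; split; apply: contraNneq nin => ey; rewrite !inE /= ey eqxx Gsym -ey Gpy.
  by rewrite pw.
by rewrite ps px orbT.
Qed.

Definition source_isolated (c : config V k) : Prop :=
  c.2 = [set ord0] /\ forall a, a != ord0 -> c.1 a != source c.

Lemma trap_step_isolated (c : config V k) (T : 'I_k.+1 -> V) :
  source_isolated c -> source_isolated (step G (trap c) c T).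
Proof.
move=> [informed sep]; set c' := step G (trap c) c T.
have src' : c'.1 ord0 \in [set source c; gate c].
  have /orP[/eqP ->|/trap_source_edge ->] := step_posP G (trap c) c T ord0.
    by rewrite !inE eqxx.
  by rewrite !inE eqxx orbT.
have ign' a : a != ord0 -> c'.1 a \notin [set source c; gate c].
  move=> a0; have occ := ignorant_occupied c a0.
  have pw : c.1 a != gate c by apply: contraTneq (gateP c) => <-; rewrite occ andbF.
  have [_ _ x_free] := and3P (exitP c).
  have px : c.1 a != exit c by apply: contraNneq x_free => <-.
  have /orP[/eqP ->|] := step_posP G (trap c) c T a.
    by rewrite !inE negb_or sep.
  exact: trap_ignorant_edge (sep a a0) pw px.
have sep' a : a != ord0 -> c'.1 a != c'.1 ord0.
  by move=> a0; apply: contraNneq (ign' a a0) => ->.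
split=> //; have -> : c'.2 = [set a | [exists b, (b \in c.2) && (c'.1 b == c'.1 a)]] by [].
apply/setP => a; rewrite !inE informed; apply/existsP/eqP => [[b]|->].
  rewrite inE => /andP[/eqP -> /eqP same]; apply/eqP/negPn/negP => a0.
  by have := sep' a a0; rewrite same eqxx.
by exists ord0; rewrite !inE !eqxx.
Qed.

Lemma run_source_isolated (sigma : agent_strategy V k) (p0 : {ffun 'I_k.+1 -> V}) t :
  injective p0 -> source_isolated (run G sigma trap_adversary p0 t).2.
Proof.
move=> p0_inj; elim: t => [|t IH] /=; last exact: trap_step_isolated IH.
by split=> // a a0; apply: contraNneq a0 => /p0_inj ->.
Qed.

End Trap.

Theorem theorem6 (V : finType) (G : rel V) (k delta : nat) :
  symmetric G -> irreflexive G ->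
  three_vertex_connected G ->
  is_min_degree G delta ->
  0 < k -> k <= delta - 2 ->
  ~ broadcast_solvable G k.
Proof.
move=> Gsym Girr conn [min_deg _] k_gt0 k_le [sigma solves].
have deg_ge v : k.+2 <= degree G v by have := min_deg v; lia.
have [p0 p0_inj] : exists p0 : {ffun 'I_k.+1 -> V}, injective p0.
  apply: ffun_injective_ord; have [v _] : exists v : V, v \in V.
    by apply/card_gt0P; case: conn => /ltnW /ltnW /ltnW.
  exact: leq_trans (ltnW (deg_ge v)) (max_card _).
have [t all_informed] := solves p0 p0_inj (@trap_adversary _ G k)
  (fun _ => trap_legal Gsym Girr deg_ge conn).
have [informed _] := run_source_isolated Gsym deg_ge sigma t p0_inj.
have : Ordinal (k_gt0 : 1 < k.+1) \in [set ord0] by rewrite -informed all_informed inE.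
by rewrite inE.
Qed.
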